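(* If $\gamma\in\Gamma\cap\mathcal{I}_\Gamma$ (i.e. $\gamma\in\Gamma$ with $\gamma^\dagger=\gamma$), then the complete geodesic hyperplane perpendicularly bisecting the geodesic segment from $1$ to $\mu_\Gamma(\gamma,1)$ does so at the point $\gamma$, so that $\gamma$ is the closest point to $1$ on this hyperplane.
   Context: $X$ is a Macfarlane complete orientable finite-volume hyperbolic 3-manifold, and the Kleinian group $\Gamma\cong\pi_1(X)$ is chosen so that its quaternion algebra (the $K$-span of the preimage of $\Gamma$ in $\mathrm{SL}_2(\mathbb{C})$, $K$ the trace field) is $\mathcal{B}=\big(\frac{a,b}{F(\sqrt{-d})}\big)$ with $i^2=a$, $j^2=b$, $ij=-ji$, where $F\subset\mathbb{R}$ and $a,b,d\in F$ are positive; $\Gamma$ is identified with its image in $\mathcal{B}^1/\{\pm1\}$. The involution is $(w+xi+yj+zij)^\dagger=\overline{w}+\overline{x}i+\overline{y}j-\overline{z}ij$; $\mathcal{M}=\{q:q^\dagger=q\}=F\oplus Fi\oplus Fj\oplus\sqrt{-d}Fij$, and $\mathcal{I}_\Gamma=\{p\in\mathcal{M}:\mathrm{tr}(p)>0,\ \mathrm{n}(p)=1\}$ (reduced trace and norm), a hyperboloid model on which $\Gamma$ acts faithfully by hyperbolic isometries via $\mu_\Gamma(\gamma,p)=\gamma p\gamma^\dagger$. *)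

From HB Require Import structures.
From mathcomp Require Import all_boot all_order all_algebra.
Set Implicit Arguments. Unset Strict Implicit. Unset Printing Implicit Defensive.
Import Order.TTheory GRing.Theory Num.Theory.
Local Open Scope ring_scope.

(* The real field F (ordered field; the paper's F is a subfield of R),
   the field K = F(sqrt(-d)), and the quaternion algebra
   B = (a,b / K) with i^2 = a, j^2 = b, ij = -ji, all written in coordinates. *)

Section Quat.
Variable F : realFieldType.
Variables (a b d : F).

(* An element of K = F(sqrt(-d)) : Kre x + Kim x * sqrt(-d). *)
Record Kel := MkK { Kre : F; Kim : F }.

Definition Kof (r : F) : Kel := MkK r 0.
Definition K0 : Kel := Kof 0.
Definition K1 : Kel := Kof 1.
Definition addK (x y : Kel) : Kel := MkK (Kre x + Kre y) (Kim x + Kim y).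
Definition oppK (x : Kel) : Kel := MkK (- Kre x) (- Kim x).
Definition mulK (x y : Kel) : Kel :=
  MkK (Kre x * Kre y - d * (Kim x * Kim y)) (Kre x * Kim y + Kim x * Kre y).
Definition conjK (x : Kel) : Kel := MkK (Kre x) (- Kim x).

(* A quaternion w + x i + y j + z ij with w,x,y,z in K. *)
Record quat := MkQ { qw : Kel; qx : Kel; qy : Kel; qz : Kel }.

Definition qone : quat := MkQ K1 K0 K0 K0.
Definition qadd (p q : quat) : quat :=
  MkQ (addK (qw p) (qw q)) (addK (qx p) (qx q)) (addK (qy p) (qy q)) (addK (qz p) (qz q)).
Definition qopp (p : quat) : quat :=
  MkQ (oppK (qw p)) (oppK (qx p)) (oppK (qy p)) (oppK (qz p)).
Definition qsub (p q : quat) : quat := qadd p (qopp q).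
Definition qscale (r : F) (p : quat) : quat :=
  MkQ (mulK (Kof r) (qw p)) (mulK (Kof r) (qx p)) (mulK (Kof r) (qy p)) (mulK (Kof r) (qz p)).

(* multiplication in (a,b / K), with k = ij, k^2 = -ab *)
Definition qmul (p q : quat) : quat :=
  let w1 := qw p in let x1 := qx p in let y1 := qy p in let z1 := qz p in
  let w2 := qw q in let x2 := qx q in let y2 := qy q in let z2 := qz q in
  MkQ
    (addK (addK (mulK w1 w2) (mulK (Kof a) (mulK x1 x2)))
          (addK (mulK (Kof b) (mulK y1 y2)) (oppK (mulK (Kof (a * b)) (mulK z1 z2)))))
    (addK (addK (mulK w1 x2) (mulK x1 w2))
          (addK (oppK (mulK (Kof b) (mulK y1 z2))) (mulK (Kof b) (mulK z1 y2))))
    (addK (addK (mulK w1 y2) (mulK y1 w2))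
          (addK (mulK (Kof a) (mulK x1 z2)) (oppK (mulK (Kof a) (mulK z1 x2)))))
    (addK (addK (mulK w1 z2) (mulK z1 w2))
          (addK (mulK x1 y2) (oppK (mulK y1 x2)))).

Definition qconj (p : quat) : quat :=
  MkQ (qw p) (oppK (qx p)) (oppK (qy p)) (oppK (qz p)).

Definition qdagger (p : quat) : quat :=
  MkQ (conjK (qw p)) (conjK (qx p)) (conjK (qy p)) (oppK (conjK (qz p))).

Definition qtr (p : quat) : Kel := addK (qw p) (qw p).
Definition qnorm (p : quat) : Kel :=
  addK (addK (mulK (qw p) (qw p)) (oppK (mulK (Kof a) (mulK (qx p) (qx p)))))
       (addK (oppK (mulK (Kof b) (mulK (qy p) (qy p))))
             (mulK (Kof (a * b)) (mulK (qz p) (qz p)))).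

Definition inM (p : quat) : Prop := qdagger p = p.

Definition inI (p : quat) : Prop :=
  inM p /\ Kim (qtr p) = 0 /\ 0 < Kre (qtr p) /\ qnorm p = K1.

Definition mu (g p : quat) : quat := qmul (qmul g p) (qdagger g).

(* the Minkowski bilinear form on M polarizing the reduced norm:
   <p,q> = tr(p conj(q)) / 2 ; on I_Gamma it equals cosh of the hyperbolic
   distance: cosh d(p,q) = <p,q>. *)
Definition bil (p q : quat) : F := Kre (qtr (qmul p (qconj q))) / 2.
Definition cosh_dist (p q : quat) : F := bil p q.

(* the geodesic segment from p to q in the hyperboloid model:
   points of I_Gamma that are nonnegative F-combinations of p and q *)
Definition geod_segment (p q x : quat) : Prop :=
  inI x /\ exists s t : F, 0 <= s /\ 0 <= t /\ x = qadd (qscale s p) (qscale t q).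

(* the complete geodesic hyperplane perpendicularly bisecting the segment [p,q]:
   I_Gamma intersected with the Minkowski-orthogonal complement of p - q
   (whose normal p - q lies in the plane of the geodesic through p and q) *)
Definition perp_bisector (p q x : quat) : Prop :=
  inI x /\ bil x (qsub p q) = 0.

End Quat.

From mathcomp Require Import all_boot all_order all_algebra.
From mathcomp Require Import ring lra.
Set Implicit Arguments.
Unset Strict Implicit.
Unset Printing Implicit Defensive.

Import Order.TTheory GRing.Theory Num.Theory.
Local Open Scope ring_scope.

(* On M the reduced norm is a Minkowski quadratic form and [bil] its polar
   form, so I_Gamma is the upper sheet of a hyperboloid.  For gamma in I_Gamma
   with trace 2 g0, Cayley-Hamilton gives mu(gamma, 1) = gamma^2 = 2 g0 gamma - 1,
   so gamma is the normalised midpoint of 1 and P = mu(gamma, 1), and a point x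
   of I_Gamma is equidistant from 1 and P exactly when <1, x> = g0 <gamma, x>.
   The reverse Cauchy-Schwarz inequality <gamma, x> >= 1 on the hyperboloid then
   shows that gamma is the point of the bisector closest to 1, and the only one
   in the span of 1 and gamma. *)

Lemma pmulr_sqr_ge0 (R : realDomainType) (c x : R) : 0 < c -> 0 <= c * x * x.
Proof. by move=> c_gt0; rewrite -mulrA -expr2 mulr_ge0 ?sqr_ge0 ?ltW. Qed.

Lemma pmulr_sqr_eq0 (R : realDomainType) (c x : R) : 0 < c -> (c * x * x == 0) = (x == 0).
Proof. by move=> c_gt0; rewrite -mulrA mulf_eq0 gt_eqF //= mulf_eq0 orbb. Qed.

Section HyperboloidModel.
Variables (F : realFieldType) (a b d : F).
Hypotheses (ha : 0 < a) (hb : 0 < b) (hd : 0 < d).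

Definition spatial_form (x1 x2 x3 y1 y2 y3 : F) : F :=
  a * x1 * y1 + b * x2 * y2 + a * b * d * x3 * y3.

Lemma spatial_formZl v x1 x2 x3 y1 y2 y3 :
  spatial_form (v * x1) (v * x2) (v * x3) y1 y2 y3 = v * spatial_form x1 x2 x3 y1 y2 y3.
Proof. by rewrite /spatial_form; ring. Qed.

Lemma spatial_formZr v x1 x2 x3 y1 y2 y3 :
  spatial_form x1 x2 x3 (v * y1) (v * y2) (v * y3) = v * spatial_form x1 x2 x3 y1 y2 y3.
Proof. by rewrite /spatial_form; ring. Qed.

Lemma spatial_form0l y1 y2 y3 : spatial_form 0 0 0 y1 y2 y3 = 0.
Proof. by rewrite /spatial_form; ring. Qed.

Lemma spatial_form_self_ge0 x1 x2 x3 : 0 <= spatial_form x1 x2 x3 x1 x2 x3.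
Proof. by rewrite /spatial_form !addr_ge0 ?pmulr_sqr_ge0 ?mulr_gt0. Qed.

Lemma spatial_form_self_eq0 x1 x2 x3 :
  spatial_form x1 x2 x3 x1 x2 x3 = 0 -> [/\ x1 = 0, x2 = 0 & x3 = 0].
Proof.
have abd_gt0 : 0 < a * b * d by rewrite !mulr_gt0.
move: (pmulr_sqr_ge0 x1 ha) (pmulr_sqr_ge0 x2 hb) (pmulr_sqr_ge0 x3 abd_gt0).
rewrite /spatial_form => t1_ge0 t2_ge0 t3_ge0 Q0.
have /eqP : a * x1 * x1 = 0 by lra.
have /eqP : b * x2 * x2 = 0 by lra.
have /eqP : a * b * d * x3 * x3 = 0 by lra.
by rewrite !pmulr_sqr_eq0 // => /eqP-> /eqP-> /eqP->.
Qed.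

Lemma spatial_form_le_mean x1 x2 x3 y1 y2 y3 :
  2 * spatial_form x1 x2 x3 y1 y2 y3 <=
  spatial_form x1 x2 x3 x1 x2 x3 + spatial_form y1 y2 y3 y1 y2 y3.
Proof.
rewrite -subr_ge0.
have -> : spatial_form x1 x2 x3 x1 x2 x3 + spatial_form y1 y2 y3 y1 y2 y3
          - 2 * spatial_form x1 x2 x3 y1 y2 y3 =
          spatial_form (x1 - y1) (x2 - y2) (x3 - y3) (x1 - y1) (x2 - y2) (x3 - y3).
  by rewrite /spatial_form; ring.
exact: spatial_form_self_ge0.
Qed.

Lemma spatial_form_CauchySchwarz x1 x2 x3 y1 y2 y3 :
  spatial_form x1 x2 x3 y1 y2 y3 ^+ 2 <=
  spatial_form x1 x2 x3 x1 x2 x3 * spatial_form y1 y2 y3 y1 y2 y3.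
Proof.
rewrite -subr_ge0.
have -> : spatial_form x1 x2 x3 x1 x2 x3 * spatial_form y1 y2 y3 y1 y2 y3
          - spatial_form x1 x2 x3 y1 y2 y3 ^+ 2 =
          a * b * (x1 * y2 - x2 * y1) * (x1 * y2 - x2 * y1)
          + a * (a * b * d) * (x1 * y3 - x3 * y1) * (x1 * y3 - x3 * y1)
          + b * (a * b * d) * (x2 * y3 - x3 * y2) * (x2 * y3 - x3 * y2).
  by rewrite /spatial_form; ring.
by rewrite !addr_ge0 ?pmulr_sqr_ge0 ?mulr_gt0.
Qed.

Lemma hyperboloid_reverse_CauchySchwarz x0 x1 x2 x3 y0 y1 y2 y3 :
  0 < x0 -> 0 < y0 ->
  x0 ^+ 2 - spatial_form x1 x2 x3 x1 x2 x3 = 1 ->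
  y0 ^+ 2 - spatial_form y1 y2 y3 y1 y2 y3 = 1 ->
  1 <= x0 * y0 - spatial_form x1 x2 x3 y1 y2 y3.
Proof.
move=> x0_gt0 y0_gt0.
have := spatial_form_le_mean x1 x2 x3 y1 y2 y3.
have := spatial_form_CauchySchwarz x1 x2 x3 y1 y2 y3.
set Bxy := spatial_form x1 x2 x3 y1 y2 y3.
set Qx := spatial_form x1 x2 x3 x1 x2 x3; set Qy := spatial_form y1 y2 y3 y1 y2 y3.
move=> CS mean x_norm1 y_norm1.
have x0y0_sqr : (x0 * y0) ^+ 2 = (1 + Qx) * (1 + Qy).
  by rewrite exprMn; congr (_ * _); lra.
have : (1 + Bxy) ^+ 2 <= (x0 * y0) ^+ 2.
  rewrite x0y0_sqr (_ : (1 + Bxy) ^+ 2 = 1 + 2 * Bxy + Bxy ^+ 2); last by ring.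
  rewrite (_ : (1 + Qx) * (1 + Qy) = 1 + (Qx + Qy) + Qx * Qy); last by ring.
  lra.
have := mulr_gt0 x0_gt0 y0_gt0; nra.
Qed.

(* The point x0 + x1 i + x2 j + x3 sqrt(-d) ij of M. *)
Definition herm (x0 x1 x2 x3 : F) : quat F :=
  MkQ (Kof x0) (Kof x1) (Kof x2) (MkK 0 x3).

Lemma herm_inj x0 x1 x2 x3 y0 y1 y2 y3 :
  herm x0 x1 x2 x3 = herm y0 y1 y2 y3 -> [/\ x0 = y0, x1 = y1, x2 = y2 & x3 = y3].
Proof. by case. Qed.

Lemma qone_herm : qone F = herm 1 0 0 0.
Proof. by []. Qed.

Lemma qdagger_herm x0 x1 x2 x3 : qdagger (herm x0 x1 x2 x3) = herm x0 x1 x2 x3.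
Proof. by rewrite /qdagger /herm /conjK /oppK /Kof /= !oppr0 opprK. Qed.

Lemma inM_herm p :
  inM p -> p = herm (Kre (qw p)) (Kre (qx p)) (Kre (qy p)) (Kim (qz p)).
Proof.
case: p => [[w0 w1] [x0 x1] [y0 y1] [z0 z1]] /=.
case=> w1N x1N y1N z0N _; rewrite /herm /Kof.
by congr (MkQ (MkK _ _) (MkK _ _) (MkK _ _) (MkK _ _)); lra.
Qed.

Lemma qtr_herm x0 x1 x2 x3 : qtr (herm x0 x1 x2 x3) = Kof (x0 + x0).
Proof. by rewrite /qtr /addK /= addr0. Qed.

Lemma qnorm_herm x0 x1 x2 x3 :
  qnorm a b d (herm x0 x1 x2 x3) = Kof (x0 ^+ 2 - spatial_form x1 x2 x3 x1 x2 x3).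
Proof.
rewrite /qnorm /spatial_form /herm /addK /oppK /mulK /Kof /=.
by congr MkK; ring.
Qed.

Lemma inI_herm p : inI a b d p ->
  exists x0 x1 x2 x3, [/\ p = herm x0 x1 x2 x3, 0 < x0
                        & x0 ^+ 2 - spatial_form x1 x2 x3 x1 x2 x3 = 1].
Proof.
case=> /inM_herm-> [_]; rewrite qtr_herm qnorm_herm /= => -[tr_gt0 [norm1]].
by do 4!eexists; split; [reflexivity | lra | exact: norm1].
Qed.

Lemma herm_inI x0 x1 x2 x3 : 0 < x0 ->
  x0 ^+ 2 - spatial_form x1 x2 x3 x1 x2 x3 = 1 -> inI a b d (herm x0 x1 x2 x3).
Proof.
move=> x0_gt0 norm1; rewrite /inI /inM qdagger_herm qtr_herm qnorm_herm norm1.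
by do !split => //=; lra.
Qed.

Lemma bil_herm x0 x1 x2 x3 y0 y1 y2 y3 :
  bil a b d (herm x0 x1 x2 x3) (herm y0 y1 y2 y3) =
  x0 * y0 - spatial_form x1 x2 x3 y1 y2 y3.
Proof.
rewrite /bil /spatial_form /qtr /qmul /qconj /herm /addK /mulK /oppK /Kof /=.
by field.
Qed.

Lemma qsub_herm x0 x1 x2 x3 y0 y1 y2 y3 :
  qsub (herm x0 x1 x2 x3) (herm y0 y1 y2 y3) =
  herm (x0 - y0) (x1 - y1) (x2 - y2) (x3 - y3).
Proof.
rewrite /qsub /qadd /qopp /herm /addK /oppK /Kof /=.
by congr (MkQ (MkK _ _) (MkK _ _) (MkK _ _) (MkK _ _)); ring.
Qed.

Lemma qadd_qscale_herm s t x0 x1 x2 x3 y0 y1 y2 y3 :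
  qadd (qscale d s (herm x0 x1 x2 x3)) (qscale d t (herm y0 y1 y2 y3)) =
  herm (s * x0 + t * y0) (s * x1 + t * y1) (s * x2 + t * y2) (s * x3 + t * y3).
Proof.
rewrite /qadd /qscale /herm /addK /mulK /Kof /=.
by congr (MkQ (MkK _ _) (MkK _ _) (MkK _ _) (MkK _ _)); ring.
Qed.

Lemma qmulr1 p : qmul a b d p (qone F) = p.
Proof.
case: p => [[w0 w1] [x0 x1] [y0 y1] [z0 z1]].
rewrite /qmul /qone /K1 /K0 /Kof /addK /mulK /oppK /=.
by congr (MkQ (MkK _ _) (MkK _ _) (MkK _ _) (MkK _ _)); ring.
Qed.

Lemma mu_herm_one x0 x1 x2 x3 :
  mu a b d (herm x0 x1 x2 x3) (qone F) =
  herm (x0 ^+ 2 + spatial_form x1 x2 x3 x1 x2 x3)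
       (2 * x0 * x1) (2 * x0 * x2) (2 * x0 * x3).
Proof.
rewrite /mu qmulr1 qdagger_herm /qmul /spatial_form /herm /addK /mulK /oppK /Kof /=.
by congr (MkQ (MkK _ _) (MkK _ _) (MkK _ _) (MkK _ _)); ring.
Qed.

Section PerpendicularBisector.
Variables g0 g1 g2 g3 : F.
Hypotheses (g0_gt0 : 0 < g0)
           (g_norm1 : g0 ^+ 2 - spatial_form g1 g2 g3 g1 g2 g3 = 1).

Local Notation gamma := (herm g0 g1 g2 g3).
Local Notation P := (mu a b d gamma (qone F)).
(* [lin u v] is the point u + v gamma. *)
Local Notation lin u v := (herm (u + v * g0) (v * g1) (v * g2) (v * g3)).

Lemma spatial_form_gamma : spatial_form g1 g2 g3 g1 g2 g3 = g0 ^+ 2 - 1.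
Proof. by rewrite -g_norm1; ring. Qed.

Lemma mu_gamma_oneE : P = lin (- 1) (2 * g0).
Proof. by rewrite mu_herm_one spatial_form_gamma; congr herm; ring. Qed.

Lemma segment_lin s t :
  qadd (qscale d s (qone F)) (qscale d t P) = lin (s - t) (2 * t * g0).
Proof. by rewrite mu_gamma_oneE qone_herm qadd_qscale_herm; congr herm; ring. Qed.

Lemma bil_one_lin u v : bil a b d (qone F) (lin u v) = u + v * g0.
Proof. by rewrite qone_herm bil_herm spatial_form0l mul1r subr0. Qed.

Lemma bil_gamma_lin u v : bil a b d gamma (lin u v) = u * g0 + v.
Proof. by rewrite bil_herm spatial_formZr spatial_form_gamma; ring. Qed.

Lemma bil_qsub_one_mu x0 x1 x2 x3 :
  bil a b d (herm x0 x1 x2 x3) (qsub (qone F) P) =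
  2 * (bil a b d (qone F) (herm x0 x1 x2 x3) - g0 * bil a b d gamma (herm x0 x1 x2 x3)).
Proof.
by rewrite mu_gamma_oneE qone_herm qsub_herm !bil_herm /spatial_form; ring.
Qed.

Lemma on_bisectorE x0 x1 x2 x3 :
  bil a b d (herm x0 x1 x2 x3) (qsub (qone F) P) = 0 <->
  bil a b d (qone F) (herm x0 x1 x2 x3) = g0 * bil a b d gamma (herm x0 x1 x2 x3).
Proof. by rewrite bil_qsub_one_mu; split; lra. Qed.

Lemma gamma_on_segment : geod_segment a b d (qone F) P gamma.
Proof.
split; first exact: herm_inI.
have s_ge0 : 0 <= (2 * g0)^-1 by rewrite invr_ge0 mulr_ge0 ?ltW.
exists (2 * g0)^-1, (2 * g0)^-1; do 2!split=> //.
by rewrite segment_lin subrr; congr herm; field; rewrite gt_eqF.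
Qed.

Lemma bil_one_gamma : bil a b d (qone F) gamma = g0.
Proof. by rewrite qone_herm bil_herm spatial_form0l mul1r subr0. Qed.

Lemma bil_gamma_self : bil a b d gamma gamma = 1.
Proof. by rewrite bil_herm -expr2. Qed.

Lemma gamma_on_bisector : perp_bisector a b d (qone F) P gamma.
Proof.
split; first exact: herm_inI.
by apply/on_bisectorE; rewrite bil_one_gamma bil_gamma_self mulr1.
Qed.

Lemma cosh_dist_one_gamma_mu : cosh_dist a b d (qone F) gamma = cosh_dist a b d gamma P.
Proof. by rewrite /cosh_dist bil_one_gamma mu_gamma_oneE bil_gamma_lin; ring. Qed.

Lemma gamma_closest_on_bisector x : perp_bisector a b d (qone F) P x ->
  cosh_dist a b d (qone F) gamma <= cosh_dist a b d (qone F) x.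
Proof.
case=> /inI_herm[x0 [x1 [x2 [x3 [-> x0_gt0 x_norm1]]]]] /on_bisectorE.
rewrite /cosh_dist bil_one_gamma => ->.
have := hyperboloid_reverse_CauchySchwarz g0_gt0 x0_gt0 g_norm1 x_norm1.
by rewrite -bil_herm; apply: ler_peMr; apply: ltW.
Qed.

Lemma segment_bisector_unique x : geod_segment a b d (qone F) P x ->
  perp_bisector a b d (qone F) P x -> x = gamma.
Proof.
case=> /inI_herm[x0 [x1 [x2 [x3 [-> x0_gt0 x_norm1]]]]] [s [t [s_ge0 [t_ge0]]]].
have v_ge0 : 0 <= 2 * t * g0 by rewrite !mulr_ge0 // ltW.
rewrite segment_lin; move: (s - t) (2 * t * g0) v_ge0 => u v v_ge0.
case/herm_inj=> e0 e1 e2 e3; subst x0 x1 x2 x3 => -[_ /on_bisectorE].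
rewrite bil_one_lin bil_gamma_lin => bisect.
rewrite spatial_formZl spatial_formZr spatial_form_gamma in x_norm1.
(* the bisector condition on x = u + v gamma reads u (1 - g0^2) = 0 *)
have /eqP : u * (1 - g0) * (1 + g0) = 0 by nra.
rewrite mulf_eq0 [1 + g0 == 0]gt_eqF ?addr_gt0 // orbF mulf_eq0 subr_eq0.
case/orP=> [/eqP u0 | /eqP g0_1].
- have v1 : v = 1 by rewrite u0 in x_norm1; nra.
  by rewrite u0 v1 add0r !mul1r.
- have [-> -> ->] : [/\ g1 = 0, g2 = 0 & g3 = 0].
    by apply: spatial_form_self_eq0; rewrite spatial_form_gamma -g0_1 expr1n subrr.
  rewrite -g0_1 in x0_gt0 x_norm1 *.
  have uv1 : u + v * 1 = 1 by nra.
  by rewrite uv1 !mulr0.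
Qed.
End PerpendicularBisector.
End HyperboloidModel.

Theorem corollary5p3 (F : realFieldType) (a b d : F)
  (ha : 0 < a) (hb : 0 < b) (hd : 0 < d)
  (Gamma : quat F -> Prop)
  (Gamma_norm1 : forall g, Gamma g -> qnorm d a b g = K1 F)
  (Gamma_one : Gamma (qone F))
  (Gamma_opp : forall g, Gamma g -> Gamma (qopp g))
  (Gamma_mul : forall g h, Gamma g -> Gamma h -> Gamma (qmul d a b g h))
  (gamma : quat F) (Hgamma : Gamma gamma) (HgI : inI d a b gamma) :
  let P := mu d a b gamma (qone F) in
  [/\ geod_segment d a b (qone F) P gamma,
      perp_bisector d a b (qone F) P gamma,
      cosh_dist d a b (qone F) gamma = cosh_dist d a b gamma P,
      (forall x, geod_segment d a b (qone F) P x ->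
                 perp_bisector d a b (qone F) P x -> x = gamma)
    & (forall x, perp_bisector d a b (qone F) P x ->
                 cosh_dist d a b (qone F) gamma <= cosh_dist d a b (qone F) x)].
Proof.
have [g0 [g1 [g2 [g3 [-> g0_gt0 g_norm1]]]]] := inI_herm HgI.
move=> P; rewrite {}/P; split.
- exact: gamma_on_segment g0_gt0 g_norm1.
- exact: gamma_on_bisector g0_gt0 g_norm1.
- exact: cosh_dist_one_gamma_mu g_norm1.
- by move=> x; apply: segment_bisector_unique.
- by move=> x; apply: gamma_closest_on_bisector.
Qed.
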